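(* Let $C\subset\mathbb{P}^2$ be the Klein quartic and let $p_1\in C\setminus\{e_1,e_2,e_3\}$. Set $p_i=\varphi^{i-1}(p_1)$ for $i=1,\dots,7$, and suppose that the lines $\overline{p_1p_3}$ and $\overline{p_5p_7}$ meet in a point of $C$. If the lines \[L_1=\overline{p_6p_1},\ L_2=\overline{p_7p_2},\ L_3=\overline{p_1p_3},\ L_4=\overline{p_2p_4},\ L_5=\overline{p_3p_5},\ L_6=\overline{p_4p_6},\ L_7=\overline{p_5p_7}\] form a heptagon, then its adjoint quartic is $C$.
   Context: Work over $\mathbb{C}$. The Klein quartic is $C=\{x^3y+y^3z+z^3x=0\}\subset\mathbb{P}^2$. Let $e_1=[1:0:0]$, $e_2=[0:1:0]$, $e_3=[0:0:1]$. Let $\zeta$ be a primitive seventh root of unity and $\varphi\colon[x:y:z]\mapsto[\zeta^4x:\zeta^2y:\zeta z]$, an automorphism of $C$ of order $7$. $\overline{pq}$ denotes the line through $p$ and $q$. A heptagon is an ordered $7$-tuple of distinct lines in $\mathbb{P}^2$ with no three concurrent; its adjoint is the unique plane quartic through the $14$ points $L_i\cap L_j$ with $i,j$ non-consecutive modulo $7$. *)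

From HB Require Import structures.
From mathcomp Require Import all_boot all_order all_algebra.
From mathcomp Require Import reals.
From mathcomp.real_closed Require Import complex.
From mathcomp Require Import mpoly.
Set Implicit Arguments. Unset Strict Implicit. Unset Printing Implicit Defensive.
Import Order.TTheory GRing.Theory Num.Theory.
Local Open Scope ring_scope.

(* Points of P^2 and lines of P^2 are represented by (nonzero) homogeneous
   coordinate vectors in K^3; a line with coordinates l is {x | l.x = 0}. *)
Section Proj.
Variable K : fieldType.
Definition pvec := 'rV[K]_3.

Definition c0 (v : pvec) := v ord0 0%R.
Definition c1 (v : pvec) := v ord0 1%R.
Definition c2 (v : pvec) := v ord0 2%R.

Definition cross (u v : pvec) : pvec :=
  \row_(k < 3) (if k == 0 :> nat then c1 u * c2 v - c2 u * c1 v
                else if k == 1 :> nat then c2 u * c0 v - c0 u * c2 v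
                else c0 u * c1 v - c1 u * c0 v).

(* two nonzero vectors represent the same projective point *)
Definition proj_eq (u v : pvec) : Prop := cross u v = 0.

(* the line through two points p, q (a genuine line iff p, q are distinct
   points of P^2) *)
Definition line_through (p q : pvec) : pvec := cross p q.

Definition meet (l m : pvec) : pvec := cross l m.

Definition on_line (p l : pvec) : Prop := c0 p * c0 l + c1 p * c1 l + c2 p * c2 l = 0.

Definition peval (F : {mpoly K[3]}) (v : pvec) : K := F.@[fun i => v ord0 i].

Definition on_curve (F : {mpoly K[3]}) (v : pvec) : Prop := v != 0 /\ peval F v = 0.

Definition klein : {mpoly K[3]} :=
  'X_0 ^+ 3 * 'X_1 + 'X_1 ^+ 3 * 'X_2 + 'X_2 ^+ 3 * 'X_0.

Definition e1 : pvec := \row_(k < 3) (if k == 0 :> nat then 1 else 0).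
Definition e2 : pvec := \row_(k < 3) (if k == 1 :> nat then 1 else 0).
Definition e3 : pvec := \row_(k < 3) (if k == 2 :> nat then 1 else 0).

Definition phi (zeta : K) (v : pvec) : pvec :=
  \row_(k < 3) (if k == 0 :> nat then zeta ^+ 4 * c0 v
                else if k == 1 :> nat then zeta ^+ 2 * c1 v
                else zeta * c2 v).

(* Heptagon: ordered 7-tuple of distinct lines, no three concurrent *)
Definition heptagon (L : 'I_7 -> pvec) : Prop :=
  (forall i, L i != 0) /\
  (forall i j, i != j -> cross (L i) (L j) != 0) /\
  (forall i j k, i != j -> j != k -> i != k ->
     \det (col_mx (L i) (col_mx (L j) (L k))) != 0).

Definition nonconsec (i j : 'I_7) : bool :=
  [&& i != j, (i + 1) %% 7 != j & (j + 1) %% 7 != i]%N.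

(* F is the adjoint of the heptagon L: the unique plane quartic through the
   14 points L_i \cap L_j with i, j non-consecutive mod 7.  "Unique plane
   quartic" is rendered as: F is a nonzero homogeneous quartic vanishing at
   these points, and every homogeneous quartic vanishing at these points is
   a scalar multiple of F. *)
Definition is_adjoint (L : 'I_7 -> pvec) (F : {mpoly K[3]}) : Prop :=
  [/\ F \is 4.-homog, F != 0,
      (forall i j, nonconsec i j -> peval F (meet (L i) (L j)) = 0) &
      (forall G : {mpoly K[3]}, G \is 4.-homog ->
         (forall i j, nonconsec i j -> peval G (meet (L i) (L j)) = 0) ->
         exists c : K, G = c *: F)].

(* the points p_i = phi^(i-1)(p_1), indexed here by 'I_7 as p_(i+1) *)
Definition orbit_pts (zeta : K) (p1 : pvec) (i : 'I_7) : pvec := iter i (phi zeta) p1.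

(* the heptagon of the statement: L_1 = p6p1, L_2 = p7p2, L_3 = p1p3,
   L_4 = p2p4, L_5 = p3p5, L_6 = p4p6, L_7 = p5p7 (indexed by 'I_7 with
   L_(k+1) at index k), i.e. L_k = line(p_{k-2}, p_k) with indices mod 7. *)
Definition hept_lines (zeta : K) (p1 : pvec) (k : 'I_7) : pvec :=
  line_through (orbit_pts zeta p1 (inZp (k + 5)%N)) (orbit_pts zeta p1 k).
End Proj.

From HB Require Import structures.
From mathcomp Require Import all_boot all_order all_algebra.
From mathcomp Require Import reals.
From mathcomp.real_closed Require Import complex.
From mathcomp Require Import mpoly.
From mathcomp Require Import ring zify.
Import Order.TTheory GRing.Theory Num.Theory.
Local Open Scope ring_scope.
Set Implicit Arguments. Unset Strict Implicit. Unset Printing Implicit Defensive.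

(* Since [phi] preserves [C] and maps each side [L_k] of the heptagon to [L_(k+1)], the
   value of the Klein form at a vertex [L_i ∩ L_j] only depends on [j - i] mod 7 up to
   sign.  The non-consecutive pairs fall into the two classes of [L_1 ∩ L_3 = p_1], which
   is on [C], and of [L_3 ∩ L_7], which is on [C] by hypothesis; so [C] passes through the
   14 vertices.  Conversely, a quartic through the 14 vertices and through [L_1 ∩ L_7] has
   five zeros on [L_1], then (using [L_k ∩ L_(k-1)]) on [L_2], ..., [L_5]; vanishing on
   five lines, it vanishes identically.  Hence every quartic through the vertices is
   proportional to the Klein form. *)

Section Coordinates.
Variable K : fieldType.
Implicit Types (u v w a b l : pvec K) (x y z : K).

Definition dot u v := c0 u * c0 v + c1 u * c1 v + c2 u * c2 v.
Definition det3 u v w := dot u (cross v w).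

Definition mkv x y z : pvec K :=
  \row_(k < 3) (if k == 0 :> nat then x else if k == 1 :> nat then y else z).

Lemma pvecP u v : c0 u = c0 v -> c1 u = c1 v -> c2 u = c2 v -> u = v.
Proof.
move=> e0 e1 e2; apply/rowP => -[[|[|[|//]]] lt_k3].
- by move: e0; rewrite /c0; congr (_ = _); congr (_ _ _); exact: val_inj.
- by move: e1; rewrite /c1; congr (_ = _); congr (_ _ _); exact: val_inj.
- by move: e2; rewrite /c2; congr (_ = _); congr (_ _ _); exact: val_inj.
Qed.

Lemma c0_cross u v : c0 (cross u v) = c1 u * c2 v - c2 u * c1 v.
Proof. by rewrite /c0 mxE. Qed.
Lemma c1_cross u v : c1 (cross u v) = c2 u * c0 v - c0 u * c2 v.
Proof. by rewrite /c1 mxE. Qed.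
Lemma c2_cross u v : c2 (cross u v) = c0 u * c1 v - c1 u * c0 v.
Proof. by rewrite /c2 mxE. Qed.
Lemma c0_mkv x y z : c0 (mkv x y z) = x. Proof. by rewrite /c0 mxE. Qed.
Lemma c1_mkv x y z : c1 (mkv x y z) = y. Proof. by rewrite /c1 mxE. Qed.
Lemma c2_mkv x y z : c2 (mkv x y z) = z. Proof. by rewrite /c2 mxE. Qed.
Lemma c0_phi zeta v : c0 (phi zeta v) = zeta ^+ 4 * c0 v. Proof. by rewrite /c0 mxE. Qed.
Lemma c1_phi zeta v : c1 (phi zeta v) = zeta ^+ 2 * c1 v. Proof. by rewrite /c1 mxE. Qed.
Lemma c2_phi zeta v : c2 (phi zeta v) = zeta * c2 v. Proof. by rewrite /c2 mxE. Qed.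
Lemma c0Z x v : c0 (x *: v) = x * c0 v. Proof. by rewrite /c0 mxE. Qed.
Lemma c1Z x v : c1 (x *: v) = x * c1 v. Proof. by rewrite /c1 mxE. Qed.
Lemma c2Z x v : c2 (x *: v) = x * c2 v. Proof. by rewrite /c2 mxE. Qed.
Lemma c0D u v : c0 (u + v) = c0 u + c0 v. Proof. by rewrite /c0 mxE. Qed.
Lemma c1D u v : c1 (u + v) = c1 u + c1 v. Proof. by rewrite /c1 mxE. Qed.
Lemma c2D u v : c2 (u + v) = c2 u + c2 v. Proof. by rewrite /c2 mxE. Qed.
Lemma c0N v : c0 (- v) = - c0 v. Proof. by rewrite /c0 mxE. Qed.
Lemma c1N v : c1 (- v) = - c1 v. Proof. by rewrite /c1 mxE. Qed.
Lemma c2N v : c2 (- v) = - c2 v. Proof. by rewrite /c2 mxE. Qed.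
Lemma c00 : c0 (0 : pvec K) = 0. Proof. by rewrite /c0 mxE. Qed.
Lemma c10 : c1 (0 : pvec K) = 0. Proof. by rewrite /c1 mxE. Qed.
Lemma c20 : c2 (0 : pvec K) = 0. Proof. by rewrite /c2 mxE. Qed.

Definition coordE := (c0_cross, c1_cross, c2_cross, c0_mkv, c1_mkv, c2_mkv,
  c0_phi, c1_phi, c2_phi, c0Z, c1Z, c2Z, c0D, c1D, c2D, c0N, c1N, c2N, c00, c10, c20).

Lemma pvec_eq0P v : v = 0 <-> [/\ c0 v = 0, c1 v = 0 & c2 v = 0].
Proof. by split=> [->|[e0 e1 e2]]; [rewrite !coordE | apply: pvecP; rewrite !coordE]. Qed.

Lemma pvec_neq0 v : v != 0 -> [\/ c0 v != 0, c1 v != 0 | c2 v != 0].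
Proof.
move=> nz_v; have [e0|] := eqVneq (c0 v) 0; last by constructor 1.
have [e1|] := eqVneq (c1 v) 0; last by constructor 2.
have [e2|] := eqVneq (c2 v) 0; last by constructor 3.
by move: nz_v; rewrite (proj2 (pvec_eq0P v) (And3 e0 e1 e2)) eqxx.
Qed.

Lemma crossNC u v : cross u v = - cross v u.
Proof. by apply: pvecP; rewrite !coordE; ring. Qed.
Lemma crossZl x u v : cross (x *: u) v = x *: cross u v.
Proof. by apply: pvecP; rewrite !coordE; ring. Qed.
Lemma crossZr x u v : cross u (x *: v) = x *: cross u v.
Proof. by apply: pvecP; rewrite !coordE; ring. Qed.
Lemma crossv0 v : cross v 0 = 0.
Proof. by apply: pvecP; rewrite !coordE; ring. Qed.
Lemma cross_self v : cross v v = 0.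
Proof. by apply: pvecP; rewrite !coordE; ring. Qed.
Lemma dotC u v : dot u v = dot v u.
Proof. by rewrite /dot; ring. Qed.
Lemma dotDZl u v w x : dot (u + x *: v) w = dot u w + x * dot v w.
Proof. by rewrite /dot !coordE; ring. Qed.
Lemma dot_crossl u v : dot (cross u v) u = 0.
Proof. by rewrite /dot !coordE; ring. Qed.
Lemma dot_crossr u v : dot (cross u v) v = 0.
Proof. by rewrite /dot !coordE; ring. Qed.
Lemma cross_crossr u v w : cross u (cross v w) = dot u w *: v - dot u v *: w.
Proof. by apply: pvecP; rewrite /dot !coordE; ring. Qed.
Lemma cross_cross_common u v w : cross (cross u v) (cross u w) = det3 u v w *: u.
Proof. by apply: pvecP; rewrite /det3 /dot !coordE; ring. Qed.
Lemma cramer u v w p :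
  det3 u v w *: p = det3 p v w *: u + det3 u p w *: v + det3 u v p *: w.
Proof. by apply: pvecP; rewrite /det3 /dot !coordE; ring. Qed.
Lemma det3_dual u v w l :
  det3 u v w *: l = dot u l *: cross v w + dot v l *: cross w u + dot w l *: cross u v.
Proof. by apply: pvecP; rewrite /det3 /dot !coordE; ring. Qed.

Lemma mkv0 : mkv 0 0 0 = 0.
Proof. by apply: pvecP; rewrite !coordE. Qed.

Lemma cross_eq0_scale q v : cross q v = 0 ->
  [/\ c0 q *: v = c0 v *: q, c1 q *: v = c1 v *: q & c2 q *: v = c2 v *: q].
Proof.
move=> qv0.
have e0 : c0 q *: v - c0 v *: q = mkv 0 (c2 (cross q v)) (- c1 (cross q v)).
  by apply: pvecP; rewrite !coordE; ring.
have e1 : c1 q *: v - c1 v *: q = mkv (- c2 (cross q v)) 0 (c0 (cross q v)).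
  by apply: pvecP; rewrite !coordE; ring.
have e2 : c2 q *: v - c2 v *: q = mkv (c1 (cross q v)) (- c0 (cross q v)) 0.
  by apply: pvecP; rewrite !coordE; ring.
rewrite qv0 !coordE oppr0 mkv0 in e0 e1 e2.
by split; apply/eqP; rewrite -subr_eq0 ?e0 ?e1 ?e2.
Qed.

End Coordinates.

Section HomogeneousForms.
Variables (K : fieldType) (d : nat).
Implicit Types (Q : {mpoly K[3]}) (a b v : pvec K) (x t : K).

Lemma prod3 (F : 'I_3 -> K) : \prod_(i < 3) F i = F 0 * F 1 * F 2.
Proof. by rewrite !big_ord_recr big_ord0 /= mul1r; congr (F _ * F _ * F _); exact: val_inj. Qed.

Lemma sum3 (F : 'I_3 -> nat) : (\sum_(i < 3) F i = F 0%R + F 1%R + F 2%R)%N.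
Proof. by rewrite !big_ord_recr big_ord0 /=; congr (F _ + F _ + F _)%N; exact: val_inj. Qed.

Definition mnm3 (i j : nat) : 'X_{1..3} :=
  [multinom (nth 0%N [:: i; j; (d - i - j)%N] k) | k < 3].

Lemma mnm3_0 i j : mnm3 i j 0 = i. Proof. by rewrite mnmE. Qed.
Lemma mnm3_1 i j : mnm3 i j 1 = j. Proof. by rewrite mnmE. Qed.
Lemma mnm3_2 i j : mnm3 i j 2 = (d - i - j)%N. Proof. by rewrite mnmE. Qed.

Lemma mdeg_mnm3 i j : (i + j <= d)%N -> mdeg (mnm3 i j) = d.
Proof. by move=> le_ij; rewrite mdegE sum3 mnm3_0 mnm3_1 mnm3_2; lia. Qed.

Lemma mnm3E (m : 'X_{1..3}) : mdeg m = d -> mnm3 (m 0%R) (m 1%R) = m.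
Proof.
rewrite mdegE sum3 => deg_m; apply/mnmP => k; rewrite mnmE.
have mE (i j : 'I_3) : val i = val j -> m i = m j by move=> /val_inj ->.
case: k => [[|[|[|//]]] lt_k3] /=; [exact: mE | exact: mE |].
by rewrite (mE (Ordinal lt_k3) 2%R) //; lia.
Qed.

Definition hcoef Q i j := Q@_(mnm3 i j).

Lemma homogE Q : Q \is d.-homog ->
  Q = \sum_(i < d.+1) \sum_(j < d.+1 | (i + j <= d)%N) hcoef Q i j *: 'X_[mnm3 i j].
Proof.
move=> hQ; apply/mpolyP => m.
have -> : (\sum_(i < d.+1) \sum_(j < d.+1 | (i + j <= d)%N) hcoef Q i j *: 'X_[mnm3 i j])@_m =
    \sum_(i < d.+1) \sum_(j < d.+1 | (i + j <= d)%N) hcoef Q i j * (mnm3 i j == m)%:R.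
  rewrite raddf_sum; apply: eq_bigr => i _; rewrite raddf_sum; apply: eq_bigr => j _.
  by rewrite /= mcoeffZ mcoeffX.
have [deg_m|deg_m] := eqVneq (mdeg m) d; last first.
  rewrite (dhomog_nemf_coeff hQ deg_m) big1 // => i _; rewrite big1 // => j le_ij.
  have [eq_m|] := eqVneq (mnm3 i j) m; last by rewrite mulr0.
  by move: deg_m; rewrite -eq_m mdeg_mnm3 ?eqxx.
have sum_m := deg_m; rewrite mdegE sum3 in sum_m.
have lt_m0 : (m 0%R < d.+1)%N by lia.
have lt_m1 : (m 1%R < d.+1)%N by lia.
rewrite (bigD1 (Ordinal lt_m0)) //= (bigD1 (Ordinal lt_m1)) /=; last by lia.
rewrite mnm3E // eqxx mulr1 /hcoef mnm3E //.
rewrite [X in _ + X]big1 ?addr0; last first.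
  move=> i ne_i; rewrite big1 // => j _.
  have [eq_m|] := eqVneq (mnm3 i j) m; last by rewrite mulr0.
  by move/negP: ne_i; case; apply/eqP/val_inj; rewrite /= -eq_m mnm3_0.
rewrite big1 ?addr0 // => j /andP[_ ne_j].
have [eq_m|] := eqVneq (mnm3 (m 0%R) j) m; last by rewrite mulr0.
by move/negP: ne_j; case; apply/eqP/val_inj; rewrite /= -eq_m mnm3_1.
Qed.

Lemma peval_homog Q v : Q \is d.-homog -> peval Q v =
  \sum_(i < d.+1) \sum_(j < d.+1 | (i + j <= d)%N)
     hcoef Q i j * (c0 v ^+ i * c1 v ^+ j * c2 v ^+ (d - i - j)).
Proof.
move=> hQ; rewrite /peval {1}(homogE hQ) raddf_sum; apply: eq_bigr => i _.
rewrite raddf_sum; apply: eq_bigr => j _.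
by rewrite /= mevalZ mevalX prod3 mnm3_0 mnm3_1 mnm3_2.
Qed.

Lemma peval_homogZ Q x v : Q \is d.-homog -> peval Q (x *: v) = x ^+ d * peval Q v.
Proof.
move=> hQ; rewrite !peval_homog // big_distrr; apply: eq_bigr => i _.
rewrite big_distrr; apply: eq_bigr => j le_ij; rewrite !coordE.
have deg_ij : d = (i + j + (d - i - j))%N by lia.
rewrite [in x ^+ d]deg_ij !exprD !exprMn /=; ring.
Qed.

Lemma peval_homog_proportional Q q v : Q \is d.-homog -> q != 0 -> cross q v = 0 ->
  peval Q q = 0 -> peval Q v = 0.
Proof.
move=> hQ nz_q /cross_eq0_scale[e0 e1 e2] Qq0.
suff Qv0 x y : x != 0 -> x *: v = y *: q -> peval Q v = 0.
  by case: (pvec_neq0 nz_q) => nz_r; [exact: Qv0 e0 | exact: Qv0 e1 | exact: Qv0 e2].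
move=> nz_x /(congr1 (peval Q)); rewrite !peval_homogZ // Qq0 mulr0 => /eqP.
by rewrite mulf_eq0 expf_eq0 (negbTE nz_x) andbF => /eqP.
Qed.

Lemma peval_meet_eq0 Q q l m : Q \is d.-homog -> q != 0 -> peval Q q = 0 ->
  dot q l = 0 -> dot q m = 0 -> peval Q (cross l m) = 0.
Proof.
move=> hQ nz_q Qq0 ql qm; apply: (peval_homog_proportional hQ nz_q _ Qq0).
by rewrite cross_crossr ql qm !scale0r subrr.
Qed.

End HomogeneousForms.

Section PolyBounds.
Variable R : nzRingType.
Implicit Types p q : {poly R}.

Lemma size_polyM_leqS p q m n :
  (size p <= m.+1)%N -> (size q <= n.+1)%N -> (size (p * q)%R <= (m + n).+1)%N.
Proof.
by move=> le_p le_q; apply: leq_trans (size_polyMleq _ _) _; lia.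
Qed.

Lemma coef_polyM_top p q m n :
  (size p <= m.+1)%N -> (size q <= n.+1)%N -> (p * q)`_(m + n) = p`_m * q`_n.
Proof.
move=> le_p le_q; rewrite coefM.
have lt_m : (m < (m + n).+1)%N by lia.
rewrite (bigD1 (Ordinal lt_m)) //= addKn big1 ?addr0 // => k ne_k.
have {}ne_k : nat_of_ord k != m by apply: contraNneq ne_k => eq_k; apply/eqP/val_inj.
case: (ltngtP k m) ne_k => lt_km _ //.
- by rewrite [q`__]nth_default ?mulr0 //; apply: leq_trans le_q _; lia.
- by rewrite [p`__]nth_default ?mul0r //; apply: leq_trans le_p _; lia.
Qed.

Lemma size_leq_coef0 p n : (size p <= n.+1)%N -> p`_n = 0 -> (size p <= n)%N.
Proof.
move=> le_p pn0; apply/leq_sizeP => k; rewrite leq_eqVlt => /predU1P[<- // | lt_nk].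
by rewrite nth_default // (leq_trans le_p).
Qed.

End PolyBounds.

Section LineRestriction.
Variables (K : fieldType) (d : nat).
Implicit Types (Q : {mpoly K[3]}) (a b v : pvec K) (x y t : K) (p q : {poly K}).

Definition linpoly x y : {poly K} := x%:P + 'X * y%:P.

Lemma horner_linpoly x y t : (linpoly x y).[t] = x + t * y.
Proof. by rewrite /linpoly !hornerE. Qed.

Lemma linpolyX x y k :
  (size (linpoly x y ^+ k) <= k.+1)%N /\ (linpoly x y ^+ k)`_k = y ^+ k.
Proof.
have le_lin : (size (linpoly x y) <= 2)%N.
  rewrite /linpoly (leq_trans (size_polyD _ _)) // geq_max size_polyC.
  apply/andP; split; first by case: (_ != 0).
  by apply: leq_trans (size_polyMleq _ _) _; rewrite size_polyX size_polyC; case: (_ != 0).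
elim: k => [|k [le_k top_k]]; first by rewrite !expr0 size_poly1 coefC.
rewrite exprS; split; first exact: (size_polyM_leqS (m := 1)).
rewrite -add1n coef_polyM_top // top_k exprS; congr (_ * _).
by rewrite /linpoly coefD coefC coefXM coefC add0r.
Qed.

Definition line_poly Q a b : {poly K} :=
  \sum_(i < d.+1) \sum_(j < d.+1 | (i + j <= d)%N) hcoef d Q i j *:
    (linpoly (c0 a) (c0 b) ^+ i * linpoly (c1 a) (c1 b) ^+ j
     * linpoly (c2 a) (c2 b) ^+ (d - i - j)).

Lemma horner_line_poly Q a b t : Q \is d.-homog ->
  (line_poly Q a b).[t] = peval Q (a + t *: b).
Proof.
move=> hQ; rewrite (peval_homog _ hQ) horner_sum; apply: eq_bigr => i _.
rewrite horner_sum; apply: eq_bigr => j _.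
by rewrite hornerZ !hornerM !horner_exp !horner_linpoly !coordE.
Qed.

Lemma size_line_poly Q a b : (size (line_poly Q a b) <= d.+1)%N.
Proof.
pose bounded p := (size p <= d.+1)%N.
have bounded_sum : forall (I : finType) (P : pred I) (F : I -> {poly K}),
    (forall i, P i -> bounded (F i)) -> bounded (\sum_(i | P i) F i).
  move=> I P F bF; apply: (big_ind bounded _ _ bF); first by rewrite /bounded size_poly0.
  move=> p q bp bq; rewrite /bounded (leq_trans (size_polyD _ _)) // geq_max.
  exact/andP.
apply: (bounded_sum) => i _; apply: (bounded_sum) => j le_ij.
apply: leq_trans (size_scale_leq _ _) _.
apply: (@leq_trans (i + j + (d - i - j)).+1); last by lia.
by apply: size_polyM_leqS; [apply: size_polyM_leqS|]; exact: (proj1 (linpolyX _ _ _)).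
Qed.

Lemma coef_line_poly_top Q a b : Q \is d.-homog -> (line_poly Q a b)`_d = peval Q b.
Proof.
move=> hQ; rewrite (peval_homog _ hQ) coef_sum; apply: eq_bigr => i _.
rewrite coef_sum; apply: eq_bigr => j le_ij; rewrite coefZ; congr (_ * _).
have [le0 _] := linpolyX (c0 a) (c0 b) i; have [le1 _] := linpolyX (c1 a) (c1 b) j.
have [le2 _] := linpolyX (c2 a) (c2 b) (d - i - j).
have := coef_polyM_top (size_polyM_leqS le0 le1) le2.
have -> : (i + j + (d - i - j) = d)%N by lia.
by move=> ->; rewrite coef_polyM_top // !(proj2 (linpolyX _ _ _)).
Qed.

End LineRestriction.

Section PointsOnLine.
Variable K : fieldType.
Implicit Types (a b l v : pvec K) (x y z : K).

Lemma dot_mkv x y z v : dot (mkv x y z) v = x * c0 v + y * c1 v + z * c2 v.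
Proof. by rewrite /dot !coordE. Qed.

Lemma on_line_decomp l a b v : l != 0 -> dot a l = 0 -> dot b l = 0 -> dot v l = 0 ->
  cross a b != 0 -> exists x y, v = x *: a + y *: b.
Proof.
move=> nz_l al bl vl nz_ab.
have det_abv : det3 a b v = 0.
  apply/eqP; have := det3_dual a b v l; rewrite al bl vl !scale0r !addr0 => /eqP.
  by rewrite scaler_eq0 (negbTE nz_l) orbF.
have [e nz_e] : exists e, det3 a b e != 0.
  have det3E e : det3 a b e = dot e (cross a b) by rewrite /det3 /dot !coordE; ring.
  case: (pvec_neq0 nz_ab) => nz_r;
    [exists (mkv 1 0 0) | exists (mkv 0 1 0) | exists (mkv 0 0 1)];
    by rewrite det3E dot_mkv !mul0r mul1r ?addr0 ?add0r.
exists ((det3 a b e)^-1 * det3 v b e), ((det3 a b e)^-1 * det3 a v e).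
have := cramer a b e v; rewrite det_abv scale0r addr0 => /(congr1 ( *:%R (det3 a b e)^-1)).
by rewrite scalerA mulVf // scale1r scalerDr !scalerA.
Qed.

Lemma on_line_param l a b v : l != 0 -> dot a l = 0 -> dot b l = 0 -> dot v l = 0 ->
  cross a b != 0 -> cross v b != 0 -> exists x t, x != 0 /\ v = x *: (a + t *: b).
Proof.
move=> nz_l al bl vl nz_ab nz_vb.
have [x [y eq_v]] := on_line_decomp nz_l al bl vl nz_ab; rewrite eq_v in nz_vb *.
have nz_x : x != 0.
  apply: contraNneq nz_vb => ->.
  by rewrite scale0r add0r crossZl cross_self scaler0.
exists x, (x^-1 * y); split=> //.
by rewrite scalerDr scalerA mulrA mulfV // mul1r.
Qed.

End PointsOnLine.

Section Vanishing.
Variables (K : numFieldType) (d : nat).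
Implicit Types (Q : {mpoly K[3]}) (a b l u v w : pvec K) (x y t : K).

Lemma exists_nonroot (p : {poly K}) : p != 0 -> exists x, p.[x] != 0.
Proof.
move=> nz_p.
have /allPn[_ /mapP[k _ ->] nroot_k] : ~~ all (root p) [seq k%:R | k <- iota 0 (size p)].
  apply: contra nz_p => roots_p; apply/eqP/(roots_geq_poly_eq0 roots_p).
    by rewrite map_inj_uniq ?iota_uniq // => m n /eqP; rewrite eqr_nat => /eqP.
  by rewrite size_map size_iota.
by exists k%:R.
Qed.

Lemma vanishing_poly_eq0 (p : {poly K}) : (forall x, p.[x] = 0) -> p = 0.
Proof.
move=> p0; have [//|/exists_nonroot[x]] := eqVneq p 0.
by rewrite p0 eqxx.
Qed.

Lemma homog_vanishing_eq0 Q : Q \is d.-homog -> (forall v, peval Q v = 0) -> Q = 0.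
Proof.
move=> hQ Q0.
suff hc0 (i j : 'I_d.+1) : (i + j <= d)%N -> hcoef d Q i j = 0.
  by rewrite (homogE hQ) big1 // => i _; rewrite big1 // => j /hc0 ->; rewrite scale0r.
move=> le_ij.
pose py y := \poly_(i < d.+1) \sum_(j < d.+1 | (i + j <= d)%N) hcoef d Q i j * y ^+ j.
have py0 y : py y = 0.
  apply: vanishing_poly_eq0 => x; rewrite horner_poly.
  transitivity (peval Q (mkv x y 1)); last exact: Q0.
  rewrite (peval_homog _ hQ); apply: eq_bigr => i' _; rewrite big_distrl /=; apply: eq_bigr => j' _.
  by rewrite !coordE expr1n mulr1; ring.
pose qi := \poly_(j < d.+1) (if (i + j <= d)%N then hcoef d Q i j else 0).
have qi0 : qi = 0.
  apply: vanishing_poly_eq0 => y; rewrite horner_poly.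
  transitivity ((py y)`_i); last by rewrite py0 coef0.
  rewrite coef_poly ltn_ord [RHS]big_mkcond /=; apply: eq_bigr => j' _.
  by case: ifP; rewrite ?mul0r.
by have := congr1 (fun p : {poly K} => p`_j) qi0; rewrite coef_poly ltn_ord le_ij coef0.
Qed.

Definition moment_poly u : {poly K} := \poly_(k < 3) [:: c0 u; c1 u; c2 u]`_k.

Lemma horner_moment_poly u x : (moment_poly u).[x] = dot (mkv 1 x (x ^+ 2)) u.
Proof. by rewrite horner_poly !big_ord_recr big_ord0 /= dot_mkv; ring. Qed.

Lemma moment_poly_neq0 u : u != 0 -> moment_poly u != 0.
Proof.
move=> nz_u; apply: contraNneq nz_u => mu0; apply/eqP/pvec_eq0P.
have coefE k : (k < 3)%N -> [:: c0 u; c1 u; c2 u]`_k = 0.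
  by move=> lt_k3; rewrite -[RHS](coef0 _ k) -mu0 coef_poly lt_k3.
by split; [exact: (coefE 0%N) | exact: (coefE 1%N) | exact: (coefE 2%N)].
Qed.

Lemma exists_dot_neq0 (I : finType) (f : I -> pvec K) :
  (forall i, f i != 0) -> exists w, forall i, dot w (f i) != 0.
Proof.
move=> nz_f.
have nz_prod : \prod_i moment_poly (f i) != 0.
  by apply/prodf_neq0 => i _; exact: moment_poly_neq0.
have [x] := exists_nonroot nz_prod; rewrite horner_prod => /prodf_neq0 nz_x.
by exists (mkv 1 x (x ^+ 2)) => i; rewrite -horner_moment_poly nz_x.
Qed.

End Vanishing.

Section VanishingOnLines.
Variables (K : numFieldType) (d : nat).
Implicit Types (Q : {mpoly K[3]}) (a b l u v w : pvec K) (x y t : K).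

(* On the line [v + t p_0] the restriction has leading coefficient [Q p_0 = 0] and
   vanishes at the [d] distinct parameters of [p_1, ..., p_d]. *)
Lemma homog_vanish_on_line Q l (p : 'I_d.+1 -> pvec K) :
  Q \is d.-homog -> l != 0 -> (forall i, p i != 0) -> (forall i, dot (p i) l = 0) ->
  (forall i j, i != j -> cross (p i) (p j) != 0) -> (forall i, peval Q (p i) = 0) ->
  forall v, dot v l = 0 -> peval Q v = 0.
Proof.
move=> hQ nz_l nz_p pl p_ne Qp0 v vl.
have [vb0|nz_vb] := eqVneq (cross v (p ord0)) 0.
  apply: (peval_homog_proportional hQ (nz_p ord0) _ (Qp0 ord0)).
  by rewrite crossNC vb0 oppr0.
have /fin_all_exists[xt xtP] : forall i : 'I_d, exists xt : K * K,
    xt.1 != 0 /\ p (lift ord0 i) = xt.1 *: (v + xt.2 *: p ord0).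
  move=> i; have ne_i0 : lift ord0 i != ord0 by rewrite eq_sym neq_lift.
  have [x [t [nz_x eq_p]]] := on_line_param nz_l vl (pl _) (pl _) nz_vb (p_ne _ _ ne_i0).
  by exists (x, t).
pose t i := (xt i).2.
have Qt i : peval Q (v + t i *: p ord0) = 0.
  have [nz_x eq_p] := xtP i; have := Qp0 (lift ord0 i).
  rewrite eq_p (peval_homogZ _ _ hQ) => /eqP; rewrite mulf_eq0 expf_eq0 (negbTE nz_x) andbF.
  by move/eqP.
have t_inj : injective t.
  move=> i j eq_t; apply/eqP/negPn/negP => ne_ij.
  have ne_lift : lift ord0 i != lift ord0 j by rewrite (inj_eq lift_inj).
  have /negP[] := p_ne _ _ ne_lift.
  rewrite (proj2 (xtP i)) (proj2 (xtP j)) -/(t i) -/(t j) eq_t.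
  by rewrite crossZl crossZr cross_self !scaler0.
have size_P : (size (line_poly d Q v (p ord0)) <= d)%N.
  by apply: size_leq_coef0; [exact: size_line_poly | rewrite (coef_line_poly_top _ _ hQ)].
have P0 : line_poly d Q v (p ord0) = 0.
  apply: (@roots_geq_poly_eq0 _ _ [seq t i | i <- enum 'I_d]).
  - by apply/allP => _ /mapP[i _ ->]; rewrite /root horner_line_poly // Qt.
  - by rewrite map_inj_uniq ?enum_uniq.
  - by rewrite size_map size_enum_ord.
by have := horner_line_poly v (p ord0) 0 hQ; rewrite P0 horner0 scale0r addr0.
Qed.

Lemma homog_vanish_on_lines Q (l : 'I_d.+1 -> pvec K) :
  Q \is d.-homog -> (forall i, l i != 0) -> (forall i j, i != j -> cross (l i) (l j) != 0) ->
  (forall i v, dot v (l i) = 0 -> peval Q v = 0) -> forall v, peval Q v = 0.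
Proof.
move=> hQ nz_l l_ne Ql0 v.
case: (pickP (fun i => dot v (l i) == 0)) => [i /eqP vli | v_off]; first exact: Ql0 vli.
have nz_vl i : dot v (l i) != 0 by rewrite v_off.
pose g i j := dot v (l i) *: l j - dot v (l j) *: l i.
pose f (ij : 'I_d.+1 * 'I_d.+1) := if ij.1 == ij.2 then l ij.1 else g ij.1 ij.2.
have nz_f ij : f ij != 0.
  rewrite /f; case: ifP => [_|/negbT ne_ij]; first exact: nz_l.
  apply: contra_neq (l_ne _ _ ne_ij) => g0.
  have : dot v (l ij.1) *: cross (l ij.1) (l ij.2) = cross (l ij.1) (g ij.1 ij.2).
    by apply: pvecP; rewrite !coordE; ring.
  by rewrite g0 crossv0 => /eqP; rewrite scaler_eq0 (negbTE (nz_vl _)) => /eqP.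
(* [dot w (g i j) != 0] makes the points where the line [v + t w] meets the [l i]
   pairwise distinct. *)
have [w w_ne] := exists_dot_neq0 nz_f.
have nz_wl i : dot w (l i) != 0 by have := w_ne (i, i); rewrite /f eqxx.
pose t i := - dot v (l i) / dot w (l i).
have vE i : dot v (l i) = - t i * dot w (l i) by rewrite /t mulNr divfK ?opprK.
have t_inj : injective t.
  move=> i j eq_t; apply/eqP/negPn/negP => ne_ij.
  have := w_ne (i, j); rewrite /f (negbTE ne_ij) /g.
  rewrite (_ : dot w _ = dot v (l i) * dot w (l j) - dot v (l j) * dot w (l i)).
    by rewrite vE (vE j) eq_t => /negP; apply; apply/eqP; ring.
  by rewrite /dot !coordE; ring.
have P0 : line_poly d Q v w = 0.
  apply: (@roots_geq_poly_eq0 _ _ [seq t i | i <- enum 'I_d.+1]).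
  - apply/allP => _ /mapP[i _ ->]; rewrite /root horner_line_poly //; apply/eqP/(Ql0 i).
    by rewrite dotDZl vE; ring.
  - by rewrite map_inj_uniq ?enum_uniq.
  - by rewrite size_map size_enum_ord size_line_poly.
by have := horner_line_poly v w 0 hQ; rewrite P0 horner0 scale0r addr0.
Qed.

End VanishingOnLines.

Lemma det_col_mx3 (K : fieldType) (a b c : pvec K) :
  \det (col_mx a (col_mx b c)) = det3 a b c.
Proof.
have entryE (v : pvec K) (k : 'I_3) :
    v ord0 k = if val k == 0 then c0 v else if val k == 1 then c1 v else c2 v.
  by rewrite /c0 /c1 /c2; case: k => [[|[|[|//]]] lt_k3] /=; congr (v _ _); exact/val_inj.
have -> : col_mx a (col_mx b c) = \matrix_(i < 3, j < 3)
    (if i == 0 :> nat then a ord0 j else if i == 1 :> nat then b ord0 j else c ord0 j).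
  apply/matrixP => i j; rewrite !mxE; case: splitP => k eq_i.
    by rewrite eq_i (ord1 k).
  by rewrite mxE; case: splitP => k' eq_k; rewrite eq_i eq_k (ord1 k').
rewrite (expand_det_row _ ord0) !big_ord_recr big_ord0 /= add0r.
rewrite /cofactor !(expand_det_row _ ord0) !big_ord_recr !big_ord0 /= !add0r.
rewrite /cofactor !det_mx11 !mxE /= !(entryE a) !(entryE b) !(entryE c) /=.
by rewrite /det3 /dot !coordE; ring.
Qed.

Lemma inZp_eq n (a b : nat) : (a %% n.+1 = b %% n.+1)%N -> inZp a = inZp b :> 'I_n.+1.
Proof. by move=> eq_ab; apply/val_inj; rewrite /= eq_ab. Qed.

Lemma inZp_neq n (a b : nat) : (a %% n.+1 != b %% n.+1)%N -> inZp a != inZp b :> 'I_n.+1.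
Proof. by apply: contraNneq => /(congr1 val) /= ->. Qed.

Lemma nonconsecE (a b : nat) : nonconsec (inZp a : 'I_7) (inZp b) =
  [&& (a %% 7 != b %% 7)%N, ((a %% 7 + 1) %% 7 != b %% 7)%N & ((b %% 7 + 1) %% 7 != a %% 7)%N].
Proof. by []. Qed.

Section Heptagon.
Variable K : numFieldType.
Implicit Types (L : 'I_7 -> pvec K) (Q F G : {mpoly K[3]}).

Lemma heptagon_quartic_eq0 Q L : heptagon L -> Q \is 4.-homog ->
  (forall i j, nonconsec i j -> peval Q (meet (L i) (L j)) = 0) ->
  peval Q (meet (L (inZp 0)) (L (inZp 6))) = 0 -> Q = 0.
Proof.
move=> [nz_L [L_ne L_det]] hQ Q_vert Q_06.
pose Ln n := L (inZp n).
have det_L a b c : (a %% 7 != b %% 7)%N -> (b %% 7 != c %% 7)%N -> (a %% 7 != c %% 7)%N ->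
    det3 (Ln a) (Ln b) (Ln c) != 0.
  by move=> ab bc ac; rewrite -det_col_mx3; apply: L_det; exact: inZp_neq.
have on_side k : peval Q (meet (Ln k) (Ln (k + 6)%N)) = 0 ->
    forall v, dot v (Ln k) = 0 -> peval Q v = 0.
  move=> Q_k6; pose p (j : 'I_5) := meet (Ln k) (Ln (k + 2 + j)%N).
  apply: (homog_vanish_on_line (p := p) hQ (nz_L _)) => [j|j|i j ne_ij|j].
  - by apply: L_ne; apply: inZp_neq; have := ltn_ord j; lia.
  - exact: dot_crossl.
  - have ne_ij' : nat_of_ord i != j by [].
    rewrite /p /meet cross_cross_common scaler_eq0 negb_or nz_L andbT.
    by apply: det_L; move: (ltn_ord i) (ltn_ord j) ne_ij'; lia.
  - have [lt_j4|ge_j4] := ltnP j 4.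
      by rewrite /p /Ln; apply: Q_vert; rewrite nonconsecE; lia.
    have -> : j = ord_max by apply/val_inj; move: (ltn_ord j) ge_j4 => /=; lia.
    by rewrite /p /= -addnA.
have side_vanish k : (k < 5)%N -> forall v, dot v (Ln k) = 0 -> peval Q v = 0.
  elim: k => [|k IHk] lt_k5; first exact: on_side.
  apply: on_side; apply: IHk; first lia.
  have -> : Ln k = Ln (k.+1 + 6)%N by congr L; apply: inZp_eq; lia.
  exact: dot_crossr.
apply: (homog_vanishing_eq0 hQ).
apply: (homog_vanish_on_lines (l := fun i : 'I_5 => Ln i) hQ) => [i|i j ne_ij|i].
- exact: nz_L.
- have ne_ij' : nat_of_ord i != j by [].
  by apply: L_ne; apply: inZp_neq; move: (ltn_ord i) (ltn_ord j) ne_ij'; lia.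
- exact: side_vanish.
Qed.

Lemma heptagon_adjoint F L : heptagon L -> F \is 4.-homog -> F != 0 ->
  (forall i j, nonconsec i j -> peval F (meet (L i) (L j)) = 0) -> is_adjoint L F.
Proof.
move=> hept hF nz_F F_vert; split=> // G hG G_vert.
set s := meet (L (inZp 0)) (L (inZp 6)).
have nz_Fs : peval F s != 0.
  by apply: contra_neq nz_F => Fs0; exact: heptagon_quartic_eq0 hept hF F_vert Fs0.
pose D := peval F s *: G - peval G s *: F.
have DE v : peval D v = peval F s * peval G v - peval G s * peval F v.
  by rewrite /peval mevalB !mevalZ.
have /eqP : D = 0.
  apply: (heptagon_quartic_eq0 hept); first by rewrite rpredB // rpredZ.
    by move=> i j ij; rewrite DE F_vert // G_vert // !mulr0 subrr.
  by rewrite DE mulrC subrr.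
rewrite subr_eq0 => /eqP eqG; exists (peval G s / peval F s).
by rewrite mulrC -scalerA -eqG scalerA mulVf // scale1r.
Qed.

End Heptagon.

Section KleinQuartic.
Variable K : fieldType.
Implicit Types (u v l m : pvec K).

Lemma peval_klein v :
  peval (klein K) v = c0 v ^+ 3 * c1 v + c1 v ^+ 3 * c2 v + c2 v ^+ 3 * c0 v.
Proof. by rewrite /peval /klein !rmorphD !rmorphM /= !mevalXU /c0 /c1 /c2; ring. Qed.

Lemma klein_homog : klein K \is 4.-homog.
Proof.
have cubic_linear (i j : 'I_3) : 'X_i ^+ 3 * 'X_j \is [in K[3], 4.-homog].
  have X1 k : 'X_k \is [in K[3], 1.-homog] by rewrite dhomogX; apply/eqP; exact: mdeg1.
  exact: (dhomogM (dhomogMn 3 (X1 i)) (X1 j)).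
by rewrite /klein !rpredD.
Qed.

Lemma klein_neq0 : klein K != 0.
Proof.
apply/eqP => klein0.
have : peval (klein K) (mkv 1 1 0) = 1 by rewrite peval_klein !coordE; ring.
by rewrite klein0 /peval meval0 => /eqP; rewrite eq_sym oner_eq0.
Qed.

Variable zeta : K.
Hypothesis zeta7 : zeta ^+ 7 = 1.

(* [phi] acts on line coordinates by [diag(zeta^3, zeta^5, zeta^6)], the inverse
   transpose of [diag(zeta^4, zeta^2, zeta)] up to the scalar [zeta^7 = 1]. *)
Definition phi_dual v := mkv (zeta ^+ 3 * c0 v) (zeta ^+ 5 * c1 v) (zeta ^+ 6 * c2 v).

Lemma cross_phi u v : cross (phi zeta u) (phi zeta v) = phi_dual (cross u v).
Proof. by apply: pvecP; rewrite /phi_dual !coordE; ring. Qed.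

Lemma cross_phi_dual l m : cross (phi_dual l) (phi_dual m) = phi zeta (cross l m).
Proof.
by apply: pvecP; rewrite /phi_dual !coordE -[RHS]mul1r -zeta7; ring.
Qed.

Lemma klein_phi v : peval (klein K) (phi zeta v) = peval (klein K) v.
Proof.
rewrite !peval_klein !coordE.
transitivity ((zeta ^+ 7) ^+ 2 * (c0 v ^+ 3 * c1 v) + zeta ^+ 7 * (c1 v ^+ 3 * c2 v)
   + zeta ^+ 7 * (c2 v ^+ 3 * c0 v)); first by ring.
by rewrite zeta7 expr1n !mul1r.
Qed.

Lemma iter_phi7 v : iter 7 (phi zeta) v = v.
Proof.
apply: pvecP; rewrite /= !coordE.
- by rewrite -[RHS]mul1r -(expr1n _ 4) -zeta7; ring.
- by rewrite -[RHS]mul1r -(expr1n _ 2) -zeta7; ring.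
- by rewrite -[RHS]mul1r -zeta7; ring.
Qed.

End KleinQuartic.

Section KleinHeptagon.
Variables (K : fieldType) (zeta : K) (p1 : pvec K).
Hypothesis zeta7 : zeta ^+ 7 = 1.

Definition orbit n := iter n (phi zeta) p1.

(* [orbit n] is [p_(n+1)] and [side n] is [L_(n+1)]. *)
Definition side n := cross (orbit (n + 5)%N) (orbit n).

Definition vertex_value a b := peval (klein K) (cross (side a) (side b)).

Lemma orbit_mod n : orbit (n %% 7) = orbit n.
Proof.
rewrite {2}(divn_eq n 7) addnC /orbit iterD; congr iter.
by elim: (n %/ 7)%N => // q IHq; rewrite mulSn iterD iter_phi7.
Qed.

Lemma hept_linesE (k : 'I_7) : hept_lines zeta p1 k = side k.
Proof. by rewrite /hept_lines /line_through /orbit_pts -!/(orbit _) /= orbit_mod. Qed.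

Lemma sideS n : side n.+1 = phi_dual zeta (side n).
Proof. by rewrite /side addSn /orbit !iterS cross_phi. Qed.

Lemma side_mod n : side (n %% 7) = side n.
Proof. by rewrite /side -(orbit_mod (n %% 7 + 5)) modnDml orbit_mod !orbit_mod. Qed.

Lemma vertex_value_shift a b k : vertex_value (a + k)%N (b + k)%N = vertex_value a b.
Proof.
elim: k => [|k IHk]; first by rewrite !addn0.
by rewrite /vertex_value !addnS !sideS cross_phi_dual // klein_phi.
Qed.

Lemma vertex_valueC a b : vertex_value a b = vertex_value b a.
Proof.
rewrite /vertex_value crossNC -scaleN1r (peval_homogZ _ _ (klein_homog K)).
by rewrite -signr_odd expr0 mul1r.
Qed.

Lemma vertex_value_mod a b : vertex_value (a %% 7) (b %% 7) = vertex_value a b.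
Proof. by rewrite /vertex_value !side_mod. Qed.

(* Invariance under [phi]: [b - a = e - c] mod 7, written additively. *)
Lemma vertex_value_eqmod a b c e : (b + c = e + a %[mod 7])%N ->
  vertex_value a b = vertex_value c e.
Proof.
move=> eq_mod; rewrite -(vertex_value_shift a b c) -(vertex_value_shift c e a) [(c + a)%N]addnC.
by rewrite -vertex_value_mod eq_mod vertex_value_mod.
Qed.

Lemma orbit_ptsE k : (k < 7)%N -> orbit_pts zeta p1 (inord k) = orbit k.
Proof. by move=> lt_k7; rewrite /orbit_pts inordK. Qed.

Lemma klein_hept_vertices : on_curve (klein K) p1 ->
  (exists q : pvec K,
      on_curve (klein K) q /\
      on_line q (line_through (orbit_pts zeta p1 (inord 0)) (orbit_pts zeta p1 (inord 2))) /\
      on_line q (line_through (orbit_pts zeta p1 (inord 4)) (orbit_pts zeta p1 (inord 6)))) ->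
  forall i j, nonconsec i j ->
    peval (klein K) (meet (hept_lines zeta p1 i) (hept_lines zeta p1 j)) = 0.
Proof.
move=> [nz_p1 p1_on] [q [[nz_q q_on] [q_02 q_46]]] i j.
have orbit_wrap n : orbit (n + 7)%N = orbit n by rewrite -orbit_mod modnDr orbit_mod.
have v02 : vertex_value 0 2 = 0.
  apply: (peval_meet_eq0 (klein_homog K) nz_p1 p1_on); rewrite dotC.
    exact: dot_crossr.
  by rewrite /side (orbit_wrap 0%N); exact: dot_crossl.
have v26 : vertex_value 2 6 = 0.
  apply: (peval_meet_eq0 (klein_homog K) nz_q q_on).
    by rewrite /side (orbit_wrap 0%N); rewrite !orbit_ptsE in q_02.
  by rewrite /side (orbit_wrap 4%N); rewrite !orbit_ptsE in q_46.
rewrite /nonconsec => /and3P[ne_ij ij_nc ji_nc].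
have {}ne_ij : nat_of_ord i != j by [].
rewrite !hept_linesE /meet -/(vertex_value _ _).
have [lt_i7 lt_j7] := (ltn_ord i, ltn_ord j).
have [e|[e|[e|e]]] : (j + 0 = 2 + i %[mod 7] \/ j + 6 = 2 + i %[mod 7] \/
    j + 2 = 6 + i %[mod 7] \/ j + 2 = 0 + i %[mod 7])%N by lia.
- by rewrite (vertex_value_eqmod e).
- by rewrite (vertex_value_eqmod e) vertex_valueC.
- by rewrite (vertex_value_eqmod e).
- by rewrite (vertex_value_eqmod e) vertex_valueC.
Qed.

End KleinHeptagon.

Theorem lemma5p2 (R : realType) (zeta : R[i]) (p1 : pvec R[i]) :
  7.-primitive_root zeta ->
  on_curve (klein R[i]) p1 ->
  ~ proj_eq p1 (e1 R[i]) -> ~ proj_eq p1 (e2 R[i]) -> ~ proj_eq p1 (e3 R[i]) ->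
  (exists q : pvec R[i],
      on_curve (klein R[i]) q /\
      on_line q (line_through (orbit_pts zeta p1 (inord 0)) (orbit_pts zeta p1 (inord 2))) /\
      on_line q (line_through (orbit_pts zeta p1 (inord 4)) (orbit_pts zeta p1 (inord 6)))) ->
  heptagon (hept_lines zeta p1) ->
  is_adjoint (hept_lines zeta p1) (klein R[i]).
Proof.
move=> /prim_expr_order zeta7 p1_on _ _ _ q_on hept.
apply: (heptagon_adjoint hept (klein_homog _) (klein_neq0 _)).
exact: klein_hept_vertices.
Qed.
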